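(* Let $N$ be a positive even integer and $\alpha,\beta$ real; put $\sigma=\alpha+\beta$. Define the rational functions $$E_1(x)=\frac{(x+3-\alpha+\beta)(x+3-\sigma)(x-1-2N+\sigma)}{4(x+1)(x+3)},\qquad E_2(x)=-\frac{(x-1+\sigma)(x-1+\alpha-\beta)(x-1+2N-\sigma)}{4(x-1)(x-3)},$$ $$G_1(x)=\frac{(\alpha^2-\beta^2)(x+\sigma-2N-1)}{(x^2-1)(x+3)},\qquad G_2(x)=\frac{(2N+2-\sigma)\big((x+\alpha-1)^2-\beta^2\big)}{(x^2-1)(x-3)},$$ and the operator $$(Hf)(x)=E_1(x)\big(f(x+4)-f(x)\big)+E_2(x)\big(f(x-4)-f(x)\big)+G_1(x)\big(f(-x-2)-f(x)\big)+G_2(x)\big(f(-x+2)-f(x)\big).$$ Then for every $n\in\{0,1,\dots,N\}$ the monic dual $-1$ Hahn polynomial $P_n$ satisfies $(HP_n)(x)=2n\,P_n(x)$ for all $x\notin\{\pm1,\pm3\}$ (in particular $HP_n$ is a polynomial of degree $n$).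
   Context: For $N$ even: $b_n^{(-1)}=2N+1-\sigma$ for $n$ even, $b_n^{(-1)}=-2N-3+\sigma$ for $n$ odd; $u_n^{(-1)}=4n(\alpha-n)$ for $n$ even, $u_n^{(-1)}=4(N-n+1)(n+\beta-N-1)$ for $n$ odd. The monic dual $-1$ Hahn polynomials are defined by $P_{-1}=0$, $P_0=1$, $P_{n+1}(x)=(x-b_n^{(-1)})P_n(x)-u_n^{(-1)}P_{n-1}(x)$ for $n\ge0$. *)

From HB Require Import structures.
From mathcomp Require Import all_boot all_order all_algebra.
Set Implicit Arguments. Unset Strict Implicit. Unset Printing Implicit Defensive.
Import Order.TTheory GRing.Theory Num.Theory.
Local Open Scope ring_scope.

Section DualHahn.
Variable R : realFieldType.
Variables (N : nat) (alpha beta : R).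

Definition sigma : R := alpha + beta.

(* recurrence coefficients b_n^{(-1)}, u_n^{(-1)} for N even *)
Definition bcoef (n : nat) : R :=
  if ~~ odd n then (2 * N%:R + 1 - sigma) else (- 2 * N%:R - 3 + sigma).

Definition ucoef (n : nat) : R :=
  if ~~ odd n then 4 * n%:R * (alpha - n%:R)
  else 4 * (N%:R - n%:R + 1) * (n%:R + beta - N%:R - 1).

(* dhPair n = (P_{n-1}, P_n), with P_{-1} = 0, P_0 = 1 *)
Fixpoint dhPair (n : nat) : {poly R} * {poly R} :=
  match n with
  | 0%N => (0, 1)
  | m.+1 => let: (a, b) := dhPair m in
            (b, ('X - (bcoef m)%:P) * b - (ucoef m)%:P * a)
  end.

Definition dualHahnP (n : nat) : {poly R} := (dhPair n).2.

Definition E1 (x : R) : R :=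
  (x + 3 - alpha + beta) * (x + 3 - sigma) * (x - 1 - 2 * N%:R + sigma)
  / (4 * (x + 1) * (x + 3)).
Definition E2 (x : R) : R :=
  - ((x - 1 + sigma) * (x - 1 + alpha - beta) * (x - 1 + 2 * N%:R - sigma)
  / (4 * (x - 1) * (x - 3))).
Definition G1 (x : R) : R :=
  (alpha ^+ 2 - beta ^+ 2) * (x + sigma - 2 * N%:R - 1)
  / ((x ^+ 2 - 1) * (x + 3)).
Definition G2 (x : R) : R :=
  (2 * N%:R + 2 - sigma) * ((x + alpha - 1) ^+ 2 - beta ^+ 2)
  / ((x ^+ 2 - 1) * (x - 3)).

Definition Hop (f : R -> R) (x : R) : R :=
  E1 x * (f (x + 4) - f x) + E2 x * (f (x - 4) - f x)
  + G1 x * (f (- x - 2) - f x) + G2 x * (f (- x + 2) - f x).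

End DualHahn.

From HB Require Import structures.
From mathcomp Require Import all_boot all_order all_algebra.
From mathcomp Require Import ring lra.
Import Order.TTheory GRing.Theory Num.Theory.
Local Open Scope ring_scope.

(* Write X for multiplication by the variable and Rf for the
   Dunkl-type reflection operator
     (Rf)(x) = f(-x-2) + rho (f(x) - f(-x-2)) / (x+1),   rho = 2N + 2 - sigma.
   1. A direct rational-function computation gives a closed formula for the
      double commutator [X,[X,H]] in terms of H, [H,X] R, H R, R and the
      identity (Hop_double_commutator).
   2. Since b_n = (-1)^n rho - 1, the recurrence shows R P_n = (-1)^n P_n.
   3. Applying the identity of step 1 to P_m and expanding X P_m and X^2 P_m
      with the three-term recurrence, H P_{m+2} is determined by the actions
      of H on P_{m+1}, P_m, u_m P_{m-1}, u_m u_{m-1} P_{m-2}; an induction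
      then yields H P_n = 2n P_n at every point where all the denominators
      involved are nonzero (x not in {1,-1,3,-3,-5}).
   4. (x^2-1)(x^2-9)(H P_n - 2n P_n) is a polynomial in x; vanishing on the
      infinitely many points 4, 5, 6, ... it is zero, which removes the
      spurious exclusion x <> -5.
   The argument never uses N even nor n <= N: the eigenvalue equation holds
   for every n. *)

Section DualHahnEigen.
Variable R : realFieldType.
Variables (N : nat) (alpha beta : R).
Local Notation H := (Hop N alpha beta).
Local Notation b := (bcoef N alpha beta).
Local Notation u := (ucoef N alpha beta).

Definition mulX (f : R -> R) (y : R) : R := y * f y.

(* The constant of the reflection operator; b_n = (-1)^n rho - 1. *)
Definition rho : R := 2 * N%:R + 2 - sigma alpha beta.

Definition Refl (f : R -> R) (y : R) : R :=
  f (- y - 2) + rho * (f y - f (- y - 2)) / (y + 1).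

Definition kappa1 : R := 8 * beta - 8 * alpha - 16 * N%:R.
Definition kappa2 : R :=
  8 * alpha - 8 * beta + 16 * N%:R - 16 * N%:R * beta + 16 * N%:R ^+ 2.

Lemma poles_neq0 {x : R} : x != 1 -> x != -1 -> x != 3 -> x != -3 ->
  [/\ x - 1 != 0, x + 1 != 0, x - 3 != 0 & x + 3 != 0].
Proof. by move=> h1 h2 h3 h4; rewrite !subr_eq0 !addr_eq0. Qed.

Lemma Hop_double_commutator (f : R -> R) (x : R) :
  x != 1 -> x != -1 -> x != 3 -> x != -3 -> x != -5 ->
  x ^+ 2 * H f x - 2 * x * H (mulX f) x + H (mulX (mulX f)) x
  = 2 * rho * (H (mulX (Refl f)) x - x * H (Refl f) x) - 8 * rho * H (Refl f) x
    + kappa1 * f x + 16 * H f x + kappa2 * Refl f x.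
Proof.
move=> h1 h2 h3 h4 h5.
have [n1 n2 n3 n4] := poles_neq0 h1 h2 h3 h4.
have n5 : x + 5 != 0 by rewrite addr_eq0.
rewrite /Hop /Refl /mulX.
have -> : - (x + 4) - 2 = - x - 6 by ring.
have -> : - (x - 4) - 2 = - x + 2 by ring.
have -> : - (- x - 2) - 2 = x by ring.
have -> : - (- x + 2) - 2 = x - 4 by ring.
(* Naming the six sampled values keeps the field normalization small. *)
set f0 := f x. set fp4 := f (x + 4). set fm4 := f (x - 4).
set fr2 := f (- x - 2). set fr2' := f (- x + 2). set fr6 := f (- x - 6).
rewrite /E1 /E2 /G1 /G2 /rho /kappa1 /kappa2 /sigma.
field.
rewrite n1 n2 n3 n4 /=.
have -> : x ^+ 2 - 1 = (x - 1) * (x + 1) by ring.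
have -> : - x + 2 + 1 = - (x - 3) by ring.
have -> : - x - 2 + 1 = - (x + 1) by ring.
have -> : x + 4 + 1 = x + 5 by ring.
by rewrite mulf_neq0 // !oppr_eq0 n2 n3 n5.
Qed.

Definition P (n : nat) (y : R) : R := (dualHahnP N alpha beta n).[y].
Definition Pprev (n : nat) (y : R) : R := ((dhPair N alpha beta n).1).[y].

Lemma P0 (y : R) : P 0 y = 1.
Proof. by rewrite /P /dualHahnP /= hornerC. Qed.

Lemma Pprev0 (y : R) : Pprev 0 y = 0.
Proof. by rewrite /Pprev /= hornerC. Qed.

Lemma PS (k : nat) (y : R) : P k.+1 y = (y - b k) * P k y - u k * Pprev k y.
Proof.
rewrite /P /Pprev /dualHahnP /=; case: (dhPair _ _ _ k) => p q /=.
by rewrite !hornerE.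
Qed.

Lemma PprevS (k : nat) (y : R) : Pprev k.+1 y = P k y.
Proof. by rewrite /P /Pprev /dualHahnP /=; case: (dhPair _ _ _ k). Qed.

Lemma ucoef0 : u 0 = 0.
Proof. by rewrite /ucoef /= mulr0 mul0r. Qed.

Lemma bcoef_sign (k : nat) : b k = (-1) ^+ k * rho - 1.
Proof. by rewrite -signr_odd /bcoef /rho /sigma; case: (odd k) => /=; ring. Qed.

Lemma Refl_lin (f g : R -> R) (c d y : R) :
  Refl (fun t => c * f t + d * g t) y = c * Refl f y + d * Refl g y.
Proof. by rewrite /Refl; ring. Qed.

Lemma Refl_mulX (f : R -> R) (y : R) : y != -1 ->
  Refl (mulX f) y = - y * Refl f y + 2 * rho * f y - 2 * Refl f y.
Proof.
move=> hy; have hy1 : y + 1 != 0 by rewrite addr_eq0.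
by rewrite /Refl /mulX; field.
Qed.

(* P_n is an eigenfunction of R with eigenvalue (-1)^n (and P_{n-1} has the
   opposite eigenvalue, which is what makes the induction go through). *)
Lemma Refl_P (k : nat) {y : R} : y != -1 ->
  Refl (P k) y = (-1) ^+ k * P k y /\ Refl (Pprev k) y = - (-1) ^+ k * Pprev k y.
Proof.
move=> hy; elim: k => [|k [IHp IHq]].
  by rewrite /Refl !P0 !Pprev0; split; ring.
have -> : Refl (Pprev k.+1) y = Refl (P k) y by rewrite /Refl !PprevS.
rewrite PprevS; split; last by rewrite IHp exprS; ring.
have -> : Refl (P k.+1) y
          = Refl (fun t => 1 * mulX (P k) t + (- b k) * P k t) y - u k * Refl (Pprev k) y.
  by rewrite /Refl /mulX !PS; ring.
rewrite Refl_lin Refl_mulX // IHp IHq PS bcoef_sign exprS.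
by rewrite -signr_odd; case: (odd k) => /=; ring.
Qed.

Definition near (x : R) : seq R := [:: x; x + 4; x - 4; - x - 2; - x + 2].

Lemma Hop_local (f g : R -> R) (x : R) :
  {in near x, f =1 g} -> H f x = H g x.
Proof. by move=> fg; rewrite /Hop !fg // !inE eqxx ?orbT. Qed.

Lemma Hop_add (f g : R -> R) (x : R) :
  H (fun y => f y + g y) x = H f x + H g x.
Proof. by rewrite /Hop; ring. Qed.

Lemma Hop_scale (f : R -> R) (c x : R) : H (fun y => c * f y) x = c * H f x.
Proof. by rewrite /Hop; ring. Qed.

(* Points where every denominator met in the induction is nonzero. *)
Definition generic (x : R) : bool := [&& x != 1, x != -1, x != 3, x != -3 & x != -5].

Lemma generic_near {x y : R} : generic x -> y \in near x -> y != -1.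
Proof.
case/and5P => h1 h2 h3 h4 h5.
rewrite !inE => /orP[/eqP->|/orP[/eqP->|/orP[/eqP->|/orP[/eqP->|/eqP->]]]].
- by [].
- by apply: contra h5 => /eqP h; apply/eqP; rewrite -(addrK 4 x) h; ring.
- by apply: contra h3 => /eqP h; apply/eqP; rewrite -(subrK 4 x) h; ring.
- by apply: contra h2 => /eqP h; apply/eqP; rewrite -[x]opprK -(subrK 2 (- x)) h; ring.
- by apply: contra h3 => /eqP h; apply/eqP; rewrite -[x]opprK -(addrK 2 (- x)) h; ring.
Qed.

Definition eigen (g : R -> R) (l : R) : Prop := forall x, generic x -> H g x = l * g x.

Lemma eigen_ext (g1 g2 : R -> R) (l : R) : g1 =1 g2 -> eigen g1 l -> eigen g2 l.
Proof.
by move=> eg E x hx; rewrite -eg -E //; apply: Hop_local => y _; rewrite eg.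
Qed.

Lemma eigen_scale (g : R -> R) (c l : R) : eigen g l -> eigen (fun y => c * g y) l.
Proof. by move=> E x hx; rewrite Hop_scale E //; ring. Qed.

Lemma eigen_zero (g : R -> R) (l : R) : g =1 (fun=> 0) -> eigen g l.
Proof. by move=> g0 x _; rewrite /Hop !g0; ring. Qed.

(* The lower terms u_m P_{m-1} and u_m u_{m-1} P_{m-2}, which vanish when
   their index is negative since u_0 = 0. *)
Definition Vlow (m : nat) (y : R) : R := u m * Pprev m y.
Definition Wlow (m : nat) (y : R) : R := if m is j.+1 then u j.+1 * Vlow j y else 0.

Lemma mulX_P (m : nat) (y : R) : mulX (P m) y = P m.+1 y + b m * P m y + Vlow m y.
Proof. by rewrite /mulX PS /Vlow; ring. Qed.

Lemma mulX_Vlow (m : nat) (y : R) :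
  mulX (Vlow m) y = u m * P m y + b m.+1 * Vlow m y + Wlow m y.
Proof.
case: m => [|j]; first by rewrite /mulX /Vlow /Wlow ucoef0 Pprev0; ring.
have b_period : b j.+2 = b j by rewrite /bcoef /= negbK.
rewrite /mulX /Vlow /Wlow PprevS mulrCA -/(mulX (P j) y) mulX_P b_period.
by rewrite /Vlow; ring.
Qed.

Lemma mulX2_P (m : nat) (y : R) :
  mulX (mulX (P m)) y = P m.+2 y + (b m.+1 + b m) * P m.+1 y
    + (u m.+1 + b m ^+ 2 + u m) * P m y + (b m + b m.+1) * Vlow m y + Wlow m y.
Proof.
have e1 := mulX_P m y; have e2 := mulX_P m.+1 y; have e3 := mulX_Vlow m y.
rewrite /mulX in e1 e2 e3 *.
rewrite e1 !mulrDr e2 [y * (b m * _)]mulrCA e1 e3 /Vlow PprevS; ring.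
Qed.

(* The induction step: the double-commutator identity applied to P_m
   determines H P_{m+2} from the eigenvalue equations of the lower terms. *)
Lemma eigen_step (m : nat) :
  eigen (P m) (2 * m%:R) -> eigen (P m.+1) (2 * m.+1%:R) ->
  eigen (Vlow m) (2 * (m%:R - 1)) -> eigen (Wlow m) (2 * (m%:R - 2)) ->
  eigen (P m.+2) (2 * m.+2%:R).
Proof.
move=> Ep Ep1 EV EW x hx; have [h1 h2 h3 h4 h5] := and5P hx.
have HX : H (mulX (P m)) x
    = 2 * m.+1%:R * P m.+1 x + b m * (2 * m%:R * P m x) + 2 * (m%:R - 1) * Vlow m x.
  rewrite (@Hop_local _ (fun y => P m.+1 y + b m * P m y + Vlow m y)).
    by rewrite !Hop_add Hop_scale Ep1 // Ep // EV.
  by move=> y _; apply: mulX_P.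
have HX2 : H (mulX (mulX (P m))) x
    = H (P m.+2) x + (b m.+1 + b m) * (2 * m.+1%:R * P m.+1 x)
      + (u m.+1 + b m ^+ 2 + u m) * (2 * m%:R * P m x)
      + (b m + b m.+1) * (2 * (m%:R - 1) * Vlow m x) + 2 * (m%:R - 2) * Wlow m x.
  rewrite (@Hop_local _ (fun y => P m.+2 y + (b m.+1 + b m) * P m.+1 y
      + (u m.+1 + b m ^+ 2 + u m) * P m y + (b m + b m.+1) * Vlow m y + Wlow m y)).
    rewrite !Hop_add (Hop_scale (P m.+1)) (Hop_scale (P m)) (Hop_scale (Vlow m)).
    by rewrite Ep1 // Ep // EV // EW.
  by move=> y _; apply: mulX2_P.
have HR : H (Refl (P m)) x = (-1) ^+ m * (2 * m%:R * P m x).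
  rewrite -Ep // -Hop_scale; apply: Hop_local => y /(generic_near hx) hy.
  by case: (Refl_P m hy).
have HXR : H (mulX (Refl (P m))) x = (-1) ^+ m * H (mulX (P m)) x.
  rewrite -Hop_scale; apply: Hop_local => y /(generic_near hx) hy.
  by rewrite /mulX; case: (Refl_P m hy) => -> _; ring.
have eP1 : P m.+1 x = (x - b m) * P m x - Vlow m x by rewrite PS.
have eP2 : P m.+2 x = (x - b m.+1) * P m.+1 x - u m.+1 * P m x by rewrite PS PprevS.
have eW : Wlow m x = (x - b m.+1) * Vlow m x - u m * P m x.
  by have := mulX_Vlow m x; rewrite /mulX mulrBl => ->; ring.
have := Hop_double_commutator (P m) x h1 h2 h3 h4 h5.
rewrite HXR HR HX2 HX Ep //; case: (Refl_P m h2) => -> _.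
rewrite eP2 eW eP1; move: (H (P m.+2) x) (P m x) (Vlow m x) => h p v.
rewrite /bcoef /ucoef /rho /kappa1 /kappa2 /sigma -signr_odd /= -!natr1.
by case: (odd m) => /=; lra.
Qed.

Lemma eigen_P1 : eigen (P 1) (2 * 1%:R).
Proof.
move=> x /and5P [h1 h2 h3 h4 _].
have [n1 n2 n3 n4] := poles_neq0 h1 h2 h3 h4.
rewrite /Hop !PS !P0 !Pprev0 /E1 /E2 /G1 /G2 /bcoef /ucoef /sigma /=.
field.
have -> : x ^+ 2 - 1 = (x - 1) * (x + 1) by ring.
by rewrite n1 n2 n3 n4 mulf_neq0.
Qed.

Lemma eigen_all (m : nat) :
  [/\ eigen (P m) (2 * m%:R), eigen (P m.+1) (2 * m.+1%:R),
      eigen (Vlow m) (2 * (m%:R - 1)) & eigen (Wlow m) (2 * (m%:R - 2))].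
Proof.
elim: m => [|m [Ep Ep1 EV EW]].
  split; [by move=> x _; rewrite /Hop !P0; ring | exact: eigen_P1 | |].
  - by apply: eigen_zero => y; rewrite /Vlow ucoef0 mul0r.
  - exact: eigen_zero.
split=> //; first exact: eigen_step.
- apply: (@eigen_ext (fun y => u m.+1 * P m y)); first by move=> y; rewrite /Vlow PprevS.
  by rewrite -[m.+1%:R]natr1 addrK; apply: eigen_scale.
- by rewrite -[m.+1%:R]natr1 (_ : m%:R + 1 - 2 = m%:R - 1 :> R); [apply: eigen_scale | ring].
Qed.

(* The numerator of H p - l p over the common denominator (x^2-1)(x^2-9). *)
Definition Hop_numer (p : {poly R}) (l : R) : {poly R} :=
  (4^-1)%:P * (('X + (3 - alpha + beta)%:P) * ('X + (3 - sigma alpha beta)%:P)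
      * ('X + (- 1 - 2 * N%:R + sigma alpha beta)%:P) * ('X - 1%:P) * ('X - 3%:P))
    * (p \Po ('X + 4%:P) - p)
  - (4^-1)%:P * (('X + (- 1 + sigma alpha beta)%:P) * ('X + (- 1 + alpha - beta)%:P)
      * ('X + (- 1 + 2 * N%:R - sigma alpha beta)%:P) * ('X + 1%:P) * ('X + 3%:P))
    * (p \Po ('X - 4%:P) - p)
  + ((alpha ^+ 2 - beta ^+ 2)%:P * ('X + (sigma alpha beta - 2 * N%:R - 1)%:P)
      * ('X - 3%:P)) * (p \Po (- 'X - 2%:P) - p)
  + ((2 * N%:R + 2 - sigma alpha beta)%:P * (('X + (alpha - 1)%:P) ^+ 2 - (beta ^+ 2)%:P)
      * ('X + 3%:P)) * (p \Po (- 'X + 2%:P) - p)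
  - (l%:P * (('X ^+ 2 - 1%:P) * ('X ^+ 2 - 9%:P))) * p.

Lemma Hop_numerE (p : {poly R}) (l x : R) : x != 1 -> x != -1 -> x != 3 -> x != -3 ->
  (Hop_numer p l).[x] = ((x ^+ 2 - 1) * (x ^+ 2 - 9)) * (H (horner p) x - l * p.[x]).
Proof.
move=> h1 h2 h3 h4.
have [n1 n2 n3 n4] := poles_neq0 h1 h2 h3 h4.
rewrite /Hop_numer !(hornerD, hornerN, hornerM, hornerX, hornerC, horner_exp, horner_comp).
rewrite /Hop /E1 /E2 /G1 /G2.
field.
have -> : x ^+ 2 - 1 = (x - 1) * (x + 1) by ring.
by rewrite n1 n2 n3 n4 mulf_neq0.
Qed.

(* Since H p - l p is a rational function, its vanishing at the generic points
   4, 5, 6, ... forces it to vanish wherever H is defined. *)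
Lemma eigen_extend (p : {poly R}) (l x : R) : eigen (horner p) l ->
  x != 1 -> x != -1 -> x != 3 -> x != -3 -> H (horner p) x = l * p.[x].
Proof.
move=> E h1 h2 h3 h4.
have numer0 : Hop_numer p l = 0.
  pose rs := [seq i%:R + 4 | i <- iota 0 (size (Hop_numer p l))] : seq R.
  apply: (@roots_geq_poly_eq0 _ _ rs); last by rewrite size_map size_iota.
  - apply/allP => _ /mapP [i _ ->].
    have hi : 0 <= i%:R :> R := ler0n _ _.
    have gen : generic (i%:R + 4) by apply/and5P; split; rewrite gt_eqF //; lra.
    have [g1 g2 g3 g4 _] := and5P gen.
    by rewrite /root Hop_numerE // E // subrr mulr0.
  - by rewrite map_inj_uniq ?iota_uniq // => i j /addIr /eqP; rewrite eqr_nat => /eqP.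
have := Hop_numerE p l x h1 h2 h3 h4; rewrite numer0 horner0 => /esym /eqP.
rewrite mulf_eq0 subr_eq0 => /orP [|/eqP //].
have -> : (x ^+ 2 - 1) * (x ^+ 2 - 9) = (x - 1) * (x + 1) * ((x - 3) * (x + 3)) by ring.
by rewrite !mulf_eq0 !subr_eq0 !addr_eq0 (negPf h1) (negPf h2) (negPf h3) (negPf h4).
Qed.

End DualHahnEigen.

Theorem mainTheorem7 (R : realFieldType) (N : nat) (alpha beta : R)
  (hN : (0 < N)%N) (hNeven : ~~ odd N) (n : nat) (hn : (n <= N)%N) (x : R)
  (hx1 : x != 1) (hxm1 : x != -1) (hx3 : x != 3) (hxm3 : x != -3) :
  Hop N alpha beta (fun y => (dualHahnP N alpha beta n).[y]) x
  = 2 * n%:R * (dualHahnP N alpha beta n).[x].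
Proof.
have [eigenP _ _ _] := @eigen_all R N alpha beta n.
exact: eigen_extend eigenP hx1 hxm1 hx3 hxm3.
Qed.
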